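(* An allocation algorithm $A$ is truthful without money and with verification for CAs with (unknown) $k$-minded bidders if and only if $A$ is $k$-set monotone, where $A$ is called $k$-set monotone if for every bidder $i$, every $\mathbf b_{-i}$ and every $a=(z,\mathcal T)\in D_i$: if $A_i(a,\mathbf b_{-i})=T$, then for every $c=(w,\mathcal W)\in D_i$ such that $\sigma(T\mid c)=W$ and $w(W)\ge z(T)$, we have $w(A_i(c,\mathbf b_{-i}))\ge w(W)$.
   Context: Combinatorial auction setting: a set $\mathsf U$ of $m$ goods and $n$ bidders. The true type of bidder $i$ is $t_i=(v_i,\mathcal S_i)$, where $\mathcal S_i$ is a private collection of $k$ nonempty subsets of $\mathsf U$ and $v_i:\mathcal S_i\to\mathbb R_{\ge0}$ is private, extended to all $S\subseteq\mathsf U$ by $v_i(S)=\max\{v_i(S'):S'\in\mathcal S_i,\ S'\subseteq S\}$ ($0$ if none; $v_i(\emptyset)=0$). A declaration of bidder $i$ is any pair $c=(w,\mathcal W)$ of the same form, extended the same way; $D_i$ is the set of all declarations of $i$. For a declaration $c=(w,\mathcal W)$ and $T\subseteq\mathsf U$, $\sigma(T\mid c)$ denotes an inclusion-maximal set in $\mathcal W\cup\{\emptyset\}$ contained in $T$ with $w(\sigma(T\mid c))=w(T)$. An allocation algorithm $A$ maps declaration profiles $\mathbf b$ to feasible allocations (each good allocated at most as many times as its supply) and is exact: $A_i(\mathbf b)\in\mathcal W_i\cup\{\emptyset\}$ where $b_i=(w_i,\mathcal W_i)$. Verification: bidder $i$ with true type $t_i$, facing $\mathbf b_{-i}$, may declare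 $b_i=(z,\mathcal T)$ only if $z(A_i(b_i,\mathbf b_{-i}))\le v_i(A_i(b_i,\mathbf b_{-i}))$. $A$ is truthful without money and with verification if for all $i$, $\mathbf b_{-i}$, true types $t_i\in D_i$ and declarations $b_i\in D_i$ permitted by verification, $v_i(A_i(t_i,\mathbf b_{-i}))\ge v_i(A_i(b_i,\mathbf b_{-i}))$. *)

From HB Require Import structures.
From mathcomp Require Import all_boot all_order all_algebra.
Set Implicit Arguments. Unset Strict Implicit. Unset Printing Implicit Defensive.
Import Order.TTheory GRing.Theory Num.Theory.
Local Open Scope ring_scope.

(* A declaration (w, W) of a bidder over the goods U with values in R:
   dsets = the collection W of requested bundles,
   dval  = the values w (a finite function; off W it is required to be 0,
           so that declarations are in bijection with pairs (w, W)). *)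
Record decl (U : finType) (R : realFieldType) := Decl {
  dsets : {set {set U}};
  dval  : {ffun {set U} -> R}
}.

Definition valid_decl (U : finType) (R : realFieldType) (k : nat)
    (d : decl U R) : Prop :=
  [/\ #|dsets d| = k,
      set0 \notin dsets d,
      (forall S, S \in dsets d -> 0 <= dval d S) &
      (forall S, S \notin dsets d -> dval d S = 0)].

Definition ext (U : finType) (R : realFieldType) (d : decl U R)
    (T : {set U}) : R :=
  \big[Num.max/0]_(S in dsets d | S \subset T) dval d S.

(* W is a (possible value of) sigma(T | d): an inclusion-maximal set of
   W_d \cup {emptyset} contained in T with w(W) = w(T). *)
Definition is_sigma (U : finType) (R : realFieldType) (d : decl U R)
    (T W : {set U}) : Prop :=
  [/\ (W \in dsets d) || (W == set0), W \subset T, ext d W = ext d T &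
      forall W', (W' \in dsets d) || (W' == set0) -> W' \subset T ->
        ext d W' = ext d T -> W \subset W' -> W' = W].

Definition upd (n : nat) (T : Type) (b : {ffun 'I_n -> T}) (i : 'I_n) (a : T)
  : {ffun 'I_n -> T} := [ffun j => if j == i then a else b j].

Definition feasible (U : finType) (n : nat) (supply : U -> nat)
    (x : {ffun 'I_n -> {set U}}) : Prop :=
  forall g : U, (#|[set j | g \in x j]| <= supply g)%N.

Definition alloc_algorithm (U : finType) (R : realFieldType) (n k : nat)
    (supply : U -> nat)
    (A : {ffun 'I_n -> decl U R} -> {ffun 'I_n -> {set U}}) : Prop :=
  forall b : {ffun 'I_n -> decl U R}, (forall j, valid_decl k (b j)) ->
    feasible supply (A b) /\
    (forall j, (A b j \in dsets (b j)) || (A b j == set0)).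

(* Truthful without money and with verification. The profile b stands for
   b_{-i} (its i-th entry is irrelevant). *)
Definition truthful_verif (U : finType) (R : realFieldType) (n k : nat)
    (A : {ffun 'I_n -> decl U R} -> {ffun 'I_n -> {set U}}) : Prop :=
  forall (i : 'I_n) (b : {ffun 'I_n -> decl U R}),
    (forall j, j != i -> valid_decl k (b j)) ->
    forall t a : decl U R, valid_decl k t -> valid_decl k a ->
      ext a (A (upd b i a) i) <= ext t (A (upd b i a) i) ->
      ext t (A (upd b i a) i) <= ext t (A (upd b i t) i).

Definition k_set_monotone (U : finType) (R : realFieldType) (n k : nat)
    (A : {ffun 'I_n -> decl U R} -> {ffun 'I_n -> {set U}}) : Prop :=
  forall (i : 'I_n) (b : {ffun 'I_n -> decl U R}),
    (forall j, j != i -> valid_decl k (b j)) ->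
    forall a : decl U R, valid_decl k a ->
    forall T : {set U}, A (upd b i a) i = T ->
    forall (c : decl U R) (W : {set U}), valid_decl k c ->
      is_sigma c T W -> ext a T <= ext c W ->
      ext c W <= ext c (A (upd b i c) i).

From HB Require Import structures.
From mathcomp Require Import all_boot all_order all_algebra.
Import Order.TTheory GRing.Theory Num.Theory.
Local Open Scope ring_scope.

(* The whole argument rests on one observation about the value extension
   w(T) = max { w(S) : S in W, S \subset T } of a declaration: every bundle T
   has a sigma-set, i.e. an inclusion-maximal W in W \cup {emptyset} with
   W \subset T and w(W) = w(T) (lemma [sigma_exists]); and by definition a
   sigma-set carries exactly the value of T ([sigma_ext]).  Hence, for the
   bundle T = A_i(a, b_{-i}) and a declaration c with sigma-set W of T,
   - the premise w(W) >= z(T) of k-set monotonicity is the verification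
     constraint "a may be declared when the truth is c", and
   - its conclusion w(A_i(c, b_{-i})) >= w(W) is the truthfulness inequality.
   So the two directions ([truthful_k_set_monotone] and
   [k_set_monotone_truthful]) are direct translations of each other, the
   second one instantiating the sigma-set given by [sigma_exists]. *)

Section ValueExtension.
Variables (U : finType) (R : realFieldType) (d : decl U R).

Lemma ext_ge0 (T : {set U}) : 0 <= ext d T.
Proof. exact: bigmax_ge_id. Qed.

Lemma ext_mono (S T : {set U}) : S \subset T -> ext d S <= ext d T.
Proof.
move=> sST; apply: bigmax_le; first exact: ext_ge0.
move=> S' /andP[S'd sS'S]; apply: le_bigmax_cond.
by rewrite S'd (subset_trans sS'S sST).
Qed.

Lemma dval_le_ext (S : {set U}) : S \in dsets d -> dval d S <= ext d S.
Proof. by move=> Sd; apply: le_bigmax_cond; rewrite Sd subxx. Qed.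

Lemma ext_attained (T : {set U}) :
  ext d T = 0 \/ exists2 S, (S \in dsets d) && (S \subset T) & ext d T = dval d S.
Proof.
apply: (big_ind (fun x => x = 0 \/
          exists2 S, (S \in dsets d) && (S \subset T) & x = dval d S)).
- by left.
- by move=> x y x_ok y_ok; rewrite /Num.max; case: ifP.
- by move=> S SdT; right; exists S.
Qed.

Definition sigma_candidate (T W : {set U}) : bool :=
  [&& (W \in dsets d) || (W == set0), W \subset T & ext d W == ext d T].

Lemma sigma_candidate_exists (T : {set U}) : exists W, sigma_candidate T W.
Proof.
case: (ext_attained T) => [extT0 | [S /andP[Sd sST] extTS]].
- exists set0; rewrite /sigma_candidate eqxx orbT sub0set /= extT0.
  by rewrite eq_le ext_ge0 -extT0 ext_mono ?sub0set.
- exists S; rewrite /sigma_candidate Sd sST /= eq_le ext_mono //=.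
  by rewrite extTS dval_le_ext.
Qed.

(* sigma(T | d) is well defined for every declaration and bundle: a
   candidate of maximal cardinality is inclusion-maximal. *)
Lemma sigma_exists (T : {set U}) : exists W, is_sigma d T W.
Proof.
have [W0 candW0] := sigma_candidate_exists T.
case: (@arg_maxnP _ W0 (sigma_candidate T) (fun W => #|W|) candW0) => W /and3P[W_in sWT /eqP extW] Wmax.
exists W; split=> // W' W'_in sW'T extW' sWW'.
apply/eqP; rewrite eq_sym eqEcard sWW' /=; apply: Wmax.
by rewrite /sigma_candidate W'_in sW'T extW' eqxx.
Qed.

Lemma sigma_ext (T W : {set U}) : is_sigma d T W -> ext d W = ext d T.
Proof. by case. Qed.

End ValueExtension.

Arguments sigma_exists {U R} d T.
Arguments sigma_ext {U R d T W}.

Section Characterization.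
Variables (U : finType) (R : realFieldType) (n k : nat).
Variable A : {ffun 'I_n -> decl U R} -> {ffun 'I_n -> {set U}}.

(* Truthfulness implies k-set monotonicity: with true type c, declaring a
   passes verification since z(T) <= w(W) = w(T), so truthfulness bounds
   w(T) by w(A_i(c, b_{-i})). *)
Lemma truthful_k_set_monotone : truthful_verif k A -> k_set_monotone k A.
Proof.
move=> truthful i b b_ok a a_ok T AaT c W c_ok sigmaW aT_le_cW.
rewrite (sigma_ext sigmaW) -AaT.
by apply: truthful => //; rewrite AaT -(sigma_ext sigmaW).
Qed.

(* k-set monotonicity implies truthfulness: apply monotonicity to the true
   type t and a sigma-set of the bundle obtained by lying with a. *)
Lemma k_set_monotone_truthful : k_set_monotone k A -> truthful_verif k A.
Proof.
move=> monotone i b b_ok t a t_ok a_ok verified.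
have [W sigmaW] := sigma_exists t (A (upd b i a) i).
rewrite -(sigma_ext sigmaW).
by apply: (monotone i b b_ok a a_ok _ erefl t W t_ok sigmaW); rewrite (sigma_ext sigmaW).
Qed.

End Characterization.

Theorem theorem2 (U : finType) (R : realFieldType) (n k : nat)
    (supply : U -> nat)
    (A : {ffun 'I_n -> decl U R} -> {ffun 'I_n -> {set U}}) :
  alloc_algorithm k supply A ->
  (truthful_verif k A <-> k_set_monotone k A).
Proof.
move=> _; split.
- exact: truthful_k_set_monotone.
- exact: k_set_monotone_truthful.
Qed.
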